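(* For all integers $n\geq 3$ and $k\geq 2$, the digraph $M(n,k)$ is connected-homogeneous.
   Context: Connected-homogeneous: every isomorphism between finite induced subdigraphs whose underlying graphs are connected extends to an automorphism. Construction of $M(n,k)$: let $F=\langle a_1\rangle*\cdots*\langle a_n\rangle$ be the free product of $n$ cyclic groups of order $k$. Form the digraph $T^*$ with vertex set $F\times\{1,\dots,n\}$, arcs in both directions between $(v,i)$ and $(v,j)$ for all $v\in F$ and $i\ne j$ (a copy of $K_n$ for each $v$), and ''cycle arcs'' $(v,i)\to(va_i,i)$. Form the canonical double cover $T^*\otimes\vec K_2$: vertex set $V T^*\times\{-,+\}$, with an arc $(x,-)\to(y,+)$ whenever $x\to y$ in $T^*$. The cycle arcs $(v,i)\to(va_i,i)$ give arcs $((v,i),-)\to((va_i,i),+)$, which form a bijection between the two levels. $M(n,k)$ is obtained by contracting all of these arcs, i.e. identifying $((v,i),-)$ with $((va_i,i),+)$ for all $v,i$, keeping the remaining arcs $((v,i),-)\to((v,j),+)$ ($i\neq j$) between the resulting vertices. Each reachability class of $M(n,k)$ is a copy of the complement of a perfect matching on $2n$ vertices. *)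

From Stdlib Require Import Relations List.
From mathcomp Require Import all_boot.
Set Implicit Arguments. Unset Strict Implicit. Unset Printing Implicit Defensive.

Section Digraph.
Variables (V : Type) (arc : V -> V -> Prop).

Definition und_adj (x y : V) : Prop := arc x y \/ arc y x.

Definition finite_vset (A : V -> Prop) : Prop :=
  exists s : list V, forall x, A x <-> List.In x s.

Definition connected_induced (A : V -> Prop) : Prop :=
  forall x y, A x -> A y ->
    clos_refl_trans V (fun u v => A u /\ A v /\ und_adj u v) x y.

Definition induced_iso (A B : V -> Prop) (f : V -> V) : Prop :=
  [/\ (forall x y, A x -> A y -> f x = f y -> x = y),
      (forall x, A x -> B (f x)),
      (forall y, B y -> exists2 x, A x & f x = y)
    & (forall x y, A x -> A y -> (arc x y <-> arc (f x) (f y)))].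

Definition automorphism (g : V -> V) : Prop :=
  bijective g /\ (forall x y, arc x y <-> arc (g x) (g y)).

Definition connected_homogeneous : Prop :=
  forall (A B : V -> Prop) (f : V -> V),
    finite_vset A -> finite_vset B ->
    connected_induced A -> connected_induced B ->
    induced_iso A B f ->
    exists g : V -> V, automorphism g /\ (forall x, A x -> g x = f x).
End Digraph.

(* Elements of F are reduced words a_{i_1}^{e_1} ... a_{i_m}^{e_m} with 0 < e_t < k and
   i_t <> i_{t+1}.  We store a word as the list of its letters (i_t, e_t) in REVERSE order
   (head of the list = rightmost letter), which makes right multiplication easy. *)
Definition fp_reduced (n k : nat) (w : seq ('I_n * nat)) : bool :=
  all (fun l => (0 < l.2) && (l.2 < k)) w && sorted (fun a b => a.1 != b.1) w.

(* right multiplication by a_j^{-1} = a_j^{k-1}, on reverse-order reduced words *)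
Definition fp_mul_ainv (n k : nat) (j : 'I_n) (w : seq ('I_n * nat)) : seq ('I_n * nat) :=
  match w with
  | (i, e) :: w' =>
      if i == j then (if e == 1 then w' else (i, e.-1) :: w')
      else (j, k.-1) :: w
  | [::] => [:: (j, k.-1)]
  end.

(* After contracting the cycle arcs ((v,i),-) -> ((v a_i,i),+) of T* (x) K_2, each vertex
   of M(n,k) is the class {((v,i),-), ((v a_i,i),+)}, which we label by (v,i) in F x [n].
   The remaining arcs ((v,i),-) -> ((v,j),+), i <> j, become (v,i) -> (v a_j^{-1}, j). *)
Definition M_vertex (n k : nat) : Type :=
  {x : seq ('I_n * nat) * 'I_n | fp_reduced k x.1}.

Definition M_arc (n k : nat) (x y : M_vertex n k) : Prop :=
  (sval x).2 != (sval y).2 /\ (sval y).1 = fp_mul_ainv k (sval y).2 (sval x).1.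

(* A vertex-transitive digraph is connected-homogeneous as soon as it has the
   one-point extension property: whenever two vertices x, x' outside a connected
   set C have the same arcs to and from C, and x is adjacent to C, some
   automorphism fixes C pointwise and sends x to x'.  An isomorphism between
   connected induced subdigraphs is then extended one vertex at a time, along an
   enumeration in which every vertex is adjacent to one listed earlier.

   In M(n,k), left multiplications by F are automorphisms, so a vertex of C
   adjacent to x, or x itself, may be assumed to carry the identity word.  Then
   {x, x'} is {(1,j), (1,j')} or {(a_j^-1,j), (a_j'^-1,j')}.  Exchanging a_j and
   a_j' on the branch of vertices whose word starts with a_j or a_j' (or which
   are (1,j), (1,j')) is an automorphism, since the only arcs leaving the branch
   join some (1,i) to some (a_l^-1,l), where it agrees with the global exchange
   of the two generators.  It swaps x and x' and fixes C: C starts outside the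
   branch, is connected, and cannot contain an inner endpoint of a crossing arc,
   because each such vertex is x, x', or adjacent to exactly one of them. *)

From Stdlib Require Import Relations List Classical ClassicalEpsilon.
From mathcomp Require Import all_boot fingroup perm.
Set Implicit Arguments. Unset Strict Implicit. Unset Printing Implicit Defensive.

Lemma clos_rt_map (U W : Type) (R : relation U) (R' : relation W) (g : U -> W) u v :
  (forall a b, R a b -> R' (g a) (g b)) ->
  clos_refl_trans U R u v -> clos_refl_trans W R' (g u) (g v).
Proof.
move=> hR; elim=> [a b /hR|a|a b c _ h1 _ h2]; [exact: rt_step|exact: rt_refl|].
exact: rt_trans h1 h2.
Qed.

Lemma count_sub_lt (T : Type) (p q : pred T) s z :
  subpred p q -> List.In z s -> q z -> ~~ p z -> count p s < count q s.
Proof.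
move=> pq; elim: s => [|a s IH] //= [<-|zs] qz pz.
  by rewrite (negbTE pz) qz add1n ltnS; apply: sub_count => x /pq.
rewrite -addnS; apply: leq_add; last exact: IH.
by case: (p a) (pq a) => // ->.
Qed.

Section OnePointExtension.
Variables (V : Type) (arc : V -> V -> Prop).
Notation automorphism := (automorphism arc).

Definition induced_adj (A : V -> Prop) (u v : V) := A u /\ A v /\ und_adj arc u v.

Definition connected_from (A : V -> Prop) (c : V) :=
  forall y, A y -> clos_refl_trans V (induced_adj A) c y.

Definition twins_on (A : V -> Prop) (x x' : V) :=
  forall a, A a -> (arc a x <-> arc a x') /\ (arc x a <-> arc x' a).

Definition extendable (A : V -> Prop) (x x' : V) :=
  exists h, [/\ automorphism h, forall a, A a -> h a = a & h x = x'].

Definition vertex_transitive := forall a b : V, exists2 g, automorphism g & g a = b.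

Definition one_point_extension :=
  forall (C : V -> Prop) c x x', C c -> connected_from C c -> ~ C x -> ~ C x' -> x <> x' ->
    und_adj arc c x -> twins_on C x x' -> extendable C x x'.

Lemma automorphism_id : automorphism id.
Proof. by split; first exists id. Qed.

Lemma automorphism_comp g h : automorphism g -> automorphism h -> automorphism (g \o h).
Proof.
move=> [bg ag] [bh ah]; split; first exact: bij_comp.
by move=> x y /=; rewrite -ag -ah.
Qed.

Lemma automorphism_inv g :
  automorphism g -> exists g', [/\ automorphism g', cancel g g' & cancel g' g].
Proof.
move=> [[g' gK g'K] ag]; exists g'; split => //; split; first by exists g.
by move=> x y; rewrite (ag (g' x)) !g'K.
Qed.

Lemma automorphism_inj g : automorphism g -> injective g.
Proof. by case=> /bij_inj. Qed.

Lemma automorphism_und_adj g x y :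
  automorphism g -> und_adj arc x y -> und_adj arc (g x) (g y).
Proof. by case=> _ ag [] /ag; [left|right]. Qed.

Section Image.
Variables (phi : V -> V) (C : V -> Prop).
Hypothesis aut_phi : automorphism phi.

Definition image_set (y : V) := exists2 a, C a & phi a = y.

Lemma image_setP a : image_set (phi a) <-> C a.
Proof.
split=> [[b Cb /(automorphism_inj aut_phi) <-] //|Ca]; by exists a.
Qed.

Lemma connected_from_image c : connected_from C c -> connected_from image_set (phi c).
Proof.
move=> conn _ [a Ca <-]; apply: clos_rt_map (conn a Ca) => u v [Cu [Cv uv]].
by split; [|split]; [apply/image_setP..|apply: automorphism_und_adj].
Qed.

Lemma twins_on_image x x' : twins_on C x x' -> twins_on image_set (phi x) (phi x').
Proof.
have [_ ap] := aut_phi.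
by move=> tw _ [a Ca <-]; rewrite -!ap; apply: tw.
Qed.

Lemma extendable_preimage x x' : extendable image_set (phi x) (phi x') -> extendable C x x'.
Proof.
move=> [h [aut_h fix_h hx]]; have [phi' [aut_phi' phiK phi'K]] := automorphism_inv aut_phi.
exists (phi' \o h \o phi); split; first by do 2 apply: automorphism_comp => //.
  by move=> a Ca /=; rewrite fix_h ?phiK //; exists a.
by rewrite /= hx phiK.
Qed.

End Image.

Inductive connected_list (A : V -> Prop) : list V -> Prop :=
| connected_list1 a : A a -> connected_list A [:: a]
| connected_listS x o y :
    connected_list A o -> A x -> List.In y o -> und_adj arc x y -> connected_list A (x :: o).

Lemma connected_list_sub A o z : connected_list A o -> List.In z o -> A z.
Proof.
elim=> [a Aa|x o' y _ IH Ax _ _] /=; first by case=> // <-.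
by case=> [<-|/IH].
Qed.

Lemma connected_list_connected A o y :
  connected_list A o -> List.In y o -> connected_from (fun u => List.In u o) y.
Proof.
move=> co; elim: co y => [a _|x o' y0 _ IH _ y0o adj] y.
  by move=> [<-|[]] _ [<-|[]]; apply: rt_refl.
set R := induced_adj (fun u => List.In u (x :: o')).
have lift u v : List.In u o' -> List.In v o' -> clos_refl_trans V R u v.
  move=> uo vo; apply: (@clos_rt_map _ _ _ _ id) (IH u uo v vo) => a b [ao [bo ab]].
  by split; [right|split; [right|]].
have xy0 : clos_refl_trans V R x y0 by apply: rt_step; split; [left|split; [right|]].
have y0x : clos_refl_trans V R y0 x.
  by apply: rt_step; split; [right|split; [left|case: adj; [right|left]]].
move=> [<-|yo] z [<-|zo].
- exact: rt_refl.
- exact: rt_trans xy0 (lift _ _ y0o zo).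
- exact: rt_trans (lift _ _ yo y0o) y0x.
- exact: lift.
Qed.

Section Extension.
Hypotheses (transitive : vertex_transitive) (extension : one_point_extension).
Variables (A : V -> Prop) (f : V -> V).
Hypothesis f_inj : forall x y, A x -> A y -> f x = f y -> x = y.
Hypothesis f_arc : forall x y, A x -> A y -> (arc x y <-> arc (f x) (f y)).

Lemma connected_list_extend o :
  connected_list A o -> exists2 g, automorphism g & forall z, List.In z o -> g z = f z.
Proof.
elim: o / => [a Aa|x o y co [g aut_g gf] Ax yo adj].
  by have [g aut_g ga] := transitive a (f a); exists g => // z [<-|[]].
have [g' [aut_g' gK g'K]] := automorphism_inv aut_g.
(* [g] sends [x'] to [f x], so it is corrected on [x] by an automorphism that
   fixes [o] and moves [x] to [x']. *)
set x' := g' (f x).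
have [xo|xo] := classic (List.In x o).
  by exists g => // z [<-|/gf]; first exact: gf.
have [xx'|xx'] := classic (x = x').
  by exists g => // z [<-|/gf //]; rewrite {1}xx' /x' g'K.
have Ao z : List.In z o -> A z := connected_list_sub co.
have x'o : ~ List.In x' o.
  move=> x'o; apply: xx'; apply: f_inj => //; first exact: Ao.
  by rewrite -(gf _ x'o) /x' g'K.
have twins : twins_on (fun u => List.In u o) x x'.
  have [_ ag] := aut_g.
  by move=> a ao; rewrite (f_arc (Ao a ao) Ax) (f_arc Ax (Ao a ao)) -(gf _ ao)
    -{1 2}(g'K (f x)) -!ag.
have yx : und_adj arc y x by case: adj; [right|left].
have [h [aut_h fix_h hx]] :=
  extension yo (connected_list_connected co yo) xo x'o xx' yx twins.
exists (g \o h); first exact: automorphism_comp.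
by move=> z [<-|zo] /=; [rewrite hx /x' g'K|rewrite fix_h // gf].
Qed.

End Extension.

Definition in_listb (o : list V) (z : V) : bool :=
  if excluded_middle_informative (List.In z o) then true else false.

Lemma in_listbP o z : reflect (List.In z o) (in_listb o z).
Proof. by rewrite /in_listb; case: excluded_middle_informative => h; constructor. Qed.

Lemma connected_list_grow (A : V -> Prop) o z :
  connected_induced arc A -> connected_list A o -> A z -> ~ List.In z o ->
  exists z', [/\ A z', ~ List.In z' o & connected_list A (z' :: o)].
Proof.
move=> conn co Az zo.
have [u uo] : exists u, List.In u o by case: co => [a _|x o' _ _ _ _ _]; eexists; left.
have /clos_rt_rt1n_iff uz := conn u z (connected_list_sub co uo) Az.
elim: uz uo zo => [a //|a b c [Aa [Ab ab]] _ IH ao co'].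
have [bo|bo] := classic (List.In b o); first exact: IH.
exists b; split => //; apply: connected_listS co Ab ao _; by case: ab; [right|left].
Qed.

Lemma connected_list_exhaust (A : V -> Prop) s :
  (forall x, A x <-> List.In x s) -> connected_induced arc A ->
  forall o, connected_list A o -> exists2 o', connected_list A o' & forall z, A z -> List.In z o'.
Proof.
move=> As conn o co; have [N] := ubnP (count (predC (in_listb o)) s).
elim: N o co => // N IH o co lt_N.
have [[z [Az zo]]|full] := classic (exists z, A z /\ ~ List.In z o); last first.
  by exists o => // z Az; apply: NNPP => zo; apply: full; exists z.
have [z' [Az' z'o co']] := connected_list_grow conn co Az zo.
apply: (IH _ co'); rewrite ltnS in lt_N; apply: leq_trans lt_N; apply: (count_sub_lt (z := z')).
- by move=> x /= /negP xo; apply/negP => /in_listbP xo'; apply/xo/in_listbP; right.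
- exact/As.
- by apply/negP => /in_listbP.
- by apply/negPn/in_listbP; left.
Qed.

Theorem connected_homogeneous_of_extension :
  vertex_transitive -> one_point_extension -> connected_homogeneous arc.
Proof.
move=> transitive extension A B f [[|a s] As] _ conn _ [f_inj _ _ f_arc].
  by exists id; split=> [|x /As //]; apply: automorphism_id.
have Aa : A a by apply/As; left.
have [o co cover] := connected_list_exhaust As conn (connected_list1 Aa).
have [g aut_g gf] := connected_list_extend transitive extension f_inj f_arc co.
by exists g; split => // x /cover /gf.
Qed.
End OnePointExtension.

Section FreeProductDigraph.
Variables (n k : nat).
Hypothesis k_gt1 : 1 < k.
Notation word := (seq ('I_n * nat)).
Notation reduced := (@fp_reduced n k).
Notation mul_ainv := (@fp_mul_ainv n k).

Definition fp_mul_a (j : 'I_n) (w : word) : word :=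
  match w with
  | (i, e) :: w' =>
      if i == j then (if e.+1 == k then w' else (i, e.+1) :: w')
      else (j, 1) :: w
  | [::] => [:: (j, 1)]
  end.

(* Reversal puts the leftmost letter at the head, where the right
   multiplications act. *)
Definition fp_a_mul (j : 'I_n) (w : word) : word := rev (fp_mul_a j (rev w)).
Definition fp_ainv_mul (j : 'I_n) (w : word) : word := rev (mul_ainv j (rev w)).

Lemma k_pred_gt0 : 0 < k.-1. Proof. by case: k k_gt1 => [|[]]. Qed.
Lemma k_pred_lt : k.-1 < k. Proof. by case: k k_gt1. Qed.
Lemma k_predK : k.-1.+1 = k. Proof. by case: k k_gt1. Qed.

Lemma fp_reduced_cons x w : reduced (x :: w) =
  [&& 0 < x.2, x.2 < k, reduced w & if w is y :: _ then x.1 != y.1 else true].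
Proof.
by rewrite /fp_reduced /=; case: w => [|y w] /=; rewrite ?andbT // -!andbA; do !bool_congr.
Qed.

Lemma fp_reduced_rev w : reduced (rev w) = reduced w.
Proof.
rewrite /fp_reduced all_rev rev_sorted; congr andb.
by case: w => [|x w] //=; apply: eq_path => a b /=; rewrite eq_sym.
Qed.

Lemma fp_reduced_mul_ainv j w : reduced w -> reduced (mul_ainv j w).
Proof.
case: w => [|[i e] w] /=; first by rewrite /fp_reduced /= k_pred_gt0 k_pred_lt.
rewrite fp_reduced_cons /= => /and4P [e_gt0 e_lt rw hd].
case: eqP => [_|/eqP ij]; last first.
  by rewrite !fp_reduced_cons /= rw hd e_gt0 e_lt eq_sym ij k_pred_gt0 k_pred_lt.
case: eqP => [//|/eqP e_neq1].
rewrite fp_reduced_cons /= rw hd (leq_ltn_trans (leq_pred e) e_lt) andbT.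
by case: e e_gt0 e_neq1 {e_lt} => [|[]].
Qed.

Lemma fp_reduced_mul_a j w : reduced w -> reduced (fp_mul_a j w).
Proof.
case: w => [|[i e] w] /=; first by rewrite /fp_reduced /= k_gt1.
rewrite fp_reduced_cons /= => /and4P [e_gt0 e_lt rw hd].
case: eqP => [_|/eqP ij]; last first.
  by rewrite !fp_reduced_cons /= rw hd e_gt0 e_lt eq_sym ij k_gt1.
case: eqP => [//|/eqP e_neq].
by rewrite fp_reduced_cons /= rw hd ltn_neqAle e_neq e_lt.
Qed.

Lemma fp_mul_ainvK j w : reduced w -> fp_mul_a j (mul_ainv j w) = w.
Proof.
case: w => [|[i e] w] /=; first by rewrite eqxx k_predK eqxx.
rewrite fp_reduced_cons /= => /and4P [e_gt0 e_lt _ hd].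
have [<-{j}|ij] := eqVneq i j; last by rewrite /= eqxx k_predK eqxx.
case: eqP => [->|_]; last by rewrite /= eqxx (prednK e_gt0) (ltn_eqF e_lt).
by case: w hd => [|[i' e'] w] //= /negbTE; rewrite eq_sym => ->.
Qed.

Lemma fp_mul_aK j w : reduced w -> mul_ainv j (fp_mul_a j w) = w.
Proof.
case: w => [|[i e] w] /=; first by rewrite eqxx.
rewrite fp_reduced_cons /= => /and4P [e_gt0 e_lt _ hd].
have [<-{j}|ij] := eqVneq i j; last by rewrite /= eqxx.
case: eqP => [ek|_]; last by rewrite /= eqxx; case: (e) e_gt0.
case: w hd => [|[i' e'] w] /= hd; first by rewrite -ek.
by move: hd; rewrite eq_sym -ek => /negbTE ->.
Qed.

Lemma fp_mul_a_cat j s t : s != [::] -> fp_mul_a j (s ++ t) = fp_mul_a j s ++ t.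
Proof. by case: s => [|[i e] s] //= _; case: ifP => //; case: ifP. Qed.

Lemma fp_mul_ainv_cat j s t : s != [::] -> mul_ainv j (s ++ t) = mul_ainv j s ++ t.
Proof. by case: s => [|[i e] s] //= _; case: ifP => //; case: ifP. Qed.

Lemma fp_a_mul_cat j s t : t != [::] -> fp_a_mul j (s ++ t) = s ++ fp_a_mul j t.
Proof.
move=> t0; rewrite /fp_a_mul rev_cat fp_mul_a_cat ?rev_cat ?revK //.
by rewrite -size_eq0 size_rev size_eq0.
Qed.

(* The two ends of a word of length at least two are independent; shorter words
   are checked case by case. *)
Lemma fp_a_mul_mul_ainv j l w :
  reduced w -> fp_a_mul j (mul_ainv l w) = mul_ainv l (fp_a_mul j w).
Proof.
case: w => [|x [|y w]] rw.
- by rewrite /fp_a_mul /= k_predK eqxx eq_sym; case: eqP.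
- case: x rw => i e; rewrite fp_reduced_cons /= => /and3P [e_gt0 e_lt _].
  rewrite /fp_a_mul /=.
  have [<-{l}|il] := eqVneq i l; have [<-{j}|ij] := eqVneq i j; rewrite ?eqxx /=.
  + have [->|e1] := eqVneq e 1.
      by case: eqP => [<-|_] /=; rewrite ?eqxx.
    rewrite /= eqxx (prednK e_gt0) (ltn_eqF e_lt).
    by case: eqP => [<-|_] /=; rewrite ?(eqxx i) ?eqSS ?(gtn_eqF e_gt0).
  + by rewrite (eqxx i); case: eqP => _ /=; rewrite ?(negbTE ij).
  + by rewrite (eqxx i); case: eqP => _ /=; rewrite ?(negbTE il).
  + by rewrite (negbTE ij) (negbTE il).
- have -> : [:: x, y & w] = [:: x] ++ y :: w by [].
  by rewrite fp_mul_ainv_cat // !fp_a_mul_cat // fp_mul_ainv_cat.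
Qed.

Lemma fp_reduced_a_mul j w : reduced w -> reduced (fp_a_mul j w).
Proof. by move=> rw; rewrite /fp_a_mul fp_reduced_rev fp_reduced_mul_a ?fp_reduced_rev. Qed.

Lemma fp_reduced_ainv_mul j w : reduced w -> reduced (fp_ainv_mul j w).
Proof. by move=> rw; rewrite /fp_ainv_mul fp_reduced_rev fp_reduced_mul_ainv ?fp_reduced_rev. Qed.

Lemma fp_a_mulK j w : reduced w -> fp_ainv_mul j (fp_a_mul j w) = w.
Proof. by move=> rw; rewrite /fp_a_mul /fp_ainv_mul revK fp_mul_aK ?revK ?fp_reduced_rev. Qed.

Lemma fp_ainv_mulK j w : reduced w -> fp_a_mul j (fp_ainv_mul j w) = w.
Proof. by move=> rw; rewrite /fp_a_mul /fp_ainv_mul revK fp_mul_ainvK ?revK ?fp_reduced_rev. Qed.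

Lemma fp_ainv_mul_mul_ainv j l w :
  reduced w -> fp_ainv_mul j (mul_ainv l w) = mul_ainv l (fp_ainv_mul j w).
Proof.
move=> rw; have rw' := fp_reduced_ainv_mul j rw.
by rewrite -{1}(fp_ainv_mulK j rw) -fp_a_mul_mul_ainv // fp_a_mulK // fp_reduced_mul_ainv.
Qed.

Definition fp_weight (w : word) := sumn (map snd w).

Lemma fp_weight_ainv_mul u j e : reduced (rcons u (j, e)) ->
  fp_weight (fp_ainv_mul j (rcons u (j, e))) < fp_weight (rcons u (j, e)).
Proof.
rewrite -fp_reduced_rev rev_rcons fp_reduced_cons /= => /and4P [e_gt0 _ _ _].
rewrite /fp_ainv_mul rev_rcons /= eqxx /fp_weight -cats1 map_cat sumn_cat /= addn0.
case: eqP => [->|_]; rewrite ?revK ?addn1 //.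
by rewrite rev_cons -cats1 map_cat sumn_cat /= revK addn0 ltn_add2l prednK.
Qed.

Definition fp_relabel (f : 'I_n -> 'I_n) (w : word) : word := [seq (f x.1, x.2) | x <- w].

Lemma fp_reduced_relabel f w : injective f -> reduced (fp_relabel f w) = reduced w.
Proof.
move=> f_inj; rewrite /fp_reduced /fp_relabel all_map; congr andb.
by case: w => [|x w] //=; rewrite path_map; apply: eq_path => a b /=; rewrite inj_eq.
Qed.

Lemma fp_mul_ainv_relabel f l w :
  injective f -> mul_ainv (f l) (fp_relabel f w) = fp_relabel f (mul_ainv l w).
Proof.
by move=> f_inj; case: w => [|[i e] w] //=; rewrite inj_eq //; case: eqP => // _; case: eqP.
Qed.

Lemma fp_mul_ainv_eq_ainv i u : reduced u -> mul_ainv i u = [:: (i, k.-1)] -> u = [::].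
Proof.
case: u => [|[i' e] u] //; rewrite fp_reduced_cons /= => /and4P [e_gt0 e_lt _].
case: eqP => [->{i'} hd|_]; last by move=> _ [].
case: eqP => [_ eu|_ [ek]]; first by move: hd; rewrite eu /= eqxx.
by move: e_lt; rewrite -(prednK e_gt0) ek k_predK ltnn.
Qed.

Notation V := (M_vertex n k).
Notation arc := (@M_arc n k).
Notation automorphism := (automorphism arc).

Definition word_arc (p q : word * 'I_n) := p.2 != q.2 /\ q.1 = mul_ainv q.2 p.1.

Definition preserves_word_arc (G : word * 'I_n -> word * 'I_n) :=
  forall p q, reduced p.1 -> reduced q.1 -> word_arc p q -> word_arc (G p) (G q).

Definition lift_vertex_map (G : word * 'I_n -> word * 'I_n)
  (G_red : forall p, reduced p.1 -> reduced (G p).1) (x : V) : V :=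
  exist _ (G (sval x)) (G_red _ (svalP x)).

Lemma lift_automorphism G G' (G_red : forall p, reduced p.1 -> reduced (G p).1)
    (G'_red : forall p, reduced p.1 -> reduced (G' p).1) :
  (forall p, reduced p.1 -> G' (G p) = p) -> (forall p, reduced p.1 -> G (G' p) = p) ->
  preserves_word_arc G -> preserves_word_arc G' -> automorphism (@lift_vertex_map G G_red).
Proof.
move=> GK G'K G_arc G'_arc.
have lift_arc H H_red : preserves_word_arc H ->
    forall x y, arc x y -> arc (@lift_vertex_map H H_red x) (lift_vertex_map H_red y).
  by move=> H_arc [p rp] [q rq]; apply: H_arc.
have liftK : cancel (lift_vertex_map G_red) (@lift_vertex_map G' G'_red).
  by move=> [p rp]; apply: val_inj; apply: GK.
split; first by exists (lift_vertex_map G'_red) => // [[p rp]]; apply: val_inj; apply: G'K.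
move=> x y; split; first exact: lift_arc.
by move/(lift_arc _ G'_red G'_arc); rewrite !liftK.
Qed.

Definition ainv_mul_pair j (p : word * 'I_n) := (fp_ainv_mul j p.1, p.2).
Definition a_mul_pair j (p : word * 'I_n) := (fp_a_mul j p.1, p.2).

Definition ainv_mul_vertex j : V -> V :=
  @lift_vertex_map (ainv_mul_pair j) (fun p => @fp_reduced_ainv_mul j p.1).

Lemma ainv_mul_automorphism j : automorphism (ainv_mul_vertex j).
Proof.
apply: (@lift_automorphism _ (a_mul_pair j) _ (fun p => @fp_reduced_a_mul j p.1)).
- by move=> [w i] /= rw; rewrite /a_mul_pair fp_ainv_mulK.
- by move=> [w i] /= rw; rewrite /ainv_mul_pair fp_a_mulK.
- by move=> [w i] [u l] rw ru [/= il ->]; split; last exact: fp_ainv_mul_mul_ainv.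
- by move=> [w i] [u l] rw ru [/= il ->]; split; last exact: fp_a_mul_mul_ainv.
Qed.

Definition one_at (i : 'I_n) : word * 'I_n := ([::], i).
Definition ainv_at (i : 'I_n) : word * 'I_n := ([:: (i, k.-1)], i).

Lemma translate_to_one v : reduced v ->
  exists2 phi, automorphism phi & forall x, (sval x).1 = v -> sval (phi x) = one_at (sval x).2.
Proof.
have [N] := ubnP (fp_weight v); elim: N v => // N IH v.
case/lastP: v => [|u [j e]] lt_N rv.
  by exists id => [|[[w i] rw] /= ->]; first exact: automorphism_id.
have [|phi aut_phi phiP] := IH _ _ (fp_reduced_ainv_mul j rv).
  by apply: leq_trans (fp_weight_ainv_mul rv) _; rewrite -ltnS.
exists (phi \o ainv_mul_vertex j); first exact/automorphism_comp/ainv_mul_automorphism.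
by move=> x xv /=; rewrite phiP //= xv.
Qed.

(* The generator of the leftmost letter of the word (the last entry of the list),
   or the label for the empty word. *)
Definition first_gen (p : word * 'I_n) : 'I_n :=
  if p.1 is x :: w then (last x w).1 else p.2.

Lemma first_gen_cat s y w i : first_gen (s ++ y :: w, i) = (last y w).1.
Proof. by case: s => [|z s] //; rewrite /first_gen /= last_cat. Qed.

Definition relabel_pair (f : 'I_n -> 'I_n) (p : word * 'I_n) := (fp_relabel f p.1, f p.2).

Lemma first_gen_relabel f p : first_gen (relabel_pair f p) = f (first_gen p).
Proof.
by case: p => [[|x w] i] //; rewrite /first_gen /= (last_map (fun x => (f x.1, x.2))).
Qed.

Lemma first_gen_one i : first_gen (one_at i) = i. Proof. by []. Qed.
Lemma first_gen_ainv i : first_gen (ainv_at i) = i. Proof. by []. Qed.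

Lemma word_arc_relabel f : injective f -> preserves_word_arc (relabel_pair f).
Proof.
move=> f_inj [w i] [u l] _ _ [/= il ->]; split; first by rewrite /= (inj_eq f_inj).
by rewrite /= fp_mul_ainv_relabel.
Qed.

Lemma word_arc_one_ainv i l : word_arc (one_at i) (ainv_at l) <-> i != l.
Proof. by split=> [[]|il]. Qed.

Lemma word_arc_first_gen p q : word_arc p q -> p.1 != [::] -> first_gen p = first_gen q.
Proof.
case: p q => [w i] [u l] [/= _ ->] {u}; case: w => [|x [|y w]] // _.
  by case: x => i' e /=; case: eqP => [->|_] //; case: eqP.
have -> : [:: x, y & w] = [:: x] ++ y :: w by [].
by rewrite fp_mul_ainv_cat // !first_gen_cat.
Qed.

Section Swap.
Variables j j' : 'I_n.

Definition in_branch (p : word * 'I_n) := (first_gen p == j) || (first_gen p == j').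

Definition swap_pair (p : word * 'I_n) :=
  if in_branch p then relabel_pair (tperm j j') p else p.

Lemma tperm_in_pair y : (tperm j j' y == j) || (tperm j j' y == j') = (y == j) || (y == j').
Proof. by case: tpermP => [->|->|//]; rewrite !eqxx ?orbT. Qed.

Lemma in_branch_relabel p : in_branch (relabel_pair (tperm j j') p) = in_branch p.
Proof. by rewrite /in_branch first_gen_relabel tperm_in_pair. Qed.

Lemma swap_pairK : involutive swap_pair.
Proof.
move=> [w i]; rewrite /swap_pair; case: (boolP (in_branch (w, i))) => [inp|/negbTE -> //].
rewrite in_branch_relabel inp /relabel_pair /= tpermK /fp_relabel -map_comp map_id_in //.
by case=> a b _ /=; rewrite tpermK.
Qed.

Lemma in_branch_word_arc p q :
  word_arc p q -> in_branch p != in_branch q -> p = one_at p.2 /\ q = ainv_at q.2.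
Proof.
move=> pq; have [w0|w0] := eqVneq p.1 [::]; last first.
  by rewrite /in_branch (word_arc_first_gen pq w0) eqxx.
by case: p q pq w0 => [w i] [u l] [/= il ->] /= ->.
Qed.

Lemma swap_pair_short p :
  p = one_at p.2 \/ p = ainv_at p.2 -> swap_pair p = relabel_pair (tperm j j') p.
Proof.
case: p => w i /= w_short; rewrite /swap_pair.
have gen_i : first_gen (w, i) = i by case: w_short => -[->].
case: ifP => //; rewrite /in_branch gen_i => /negbT; rewrite negb_or => /andP [ij ij'].
by case: w_short => -[->]; rewrite /relabel_pair /= tpermD // eq_sym.
Qed.

Lemma swap_pair_arc : preserves_word_arc swap_pair.
Proof.
move=> p q rp rq pq; have [same|cross] := eqVneq (in_branch p) (in_branch q).
  rewrite /swap_pair -same; case: ifP => // _.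
  by apply: word_arc_relabel rp rq pq; apply: perm_inj.
have [p_one q_ainv] := in_branch_word_arc pq cross.
rewrite !swap_pair_short; [|by right|by left].
by apply: word_arc_relabel rp rq pq; apply: perm_inj.
Qed.

Lemma swap_pair_reduced p : reduced p.1 -> reduced (swap_pair p).1.
Proof.
by rewrite /swap_pair; case: ifP => //= _; rewrite fp_reduced_relabel //; apply: perm_inj.
Qed.

Definition swap_vertex : V -> V := lift_vertex_map swap_pair_reduced.

Lemma swap_automorphism : automorphism swap_vertex.
Proof.
apply: (lift_automorphism _ swap_pair_reduced) => [p|p||]; rewrite ?swap_pairK //.
all: exact: swap_pair_arc.
Qed.

Hypothesis jj' : j != j'.

Definition branch_roots (p p' : word * 'I_n) :=
  (p = one_at j /\ p' = one_at j') \/ (p = ainv_at j /\ p' = ainv_at j').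

(* Inside the connected set [D] no arc crosses the boundary of the branch: the
   inner endpoint of a crossing arc is [one_at l] or [ainv_at l] with [l] in
   [{j, j'}], and such a vertex is either [x], [x'], or adjacent to exactly one
   of them. *)
Lemma swap_extendable (D : V -> Prop) d x x' :
  D d -> connected_from arc D d -> ~ D x -> ~ D x' -> twins_on arc D x x' ->
  ~~ in_branch (sval d) -> branch_roots (sval x) (sval x') -> extendable arc D x x'.
Proof.
move=> Dd conn Dx Dx' twins d_out xx'_at.
have not_boundary b l :
    D b -> (l == j) || (l == j') -> sval b = one_at l \/ sval b = ainv_at l -> False.
  move=> Db l_jj' b_at; have [bxx' xx'b] := twins b Db.
  have twin_sep : ~ ((j != l) <-> (j' != l)).
    have j'j : j' != j by rewrite eq_sym.
    case/orP: l_jj' => /eqP ->; rewrite eqxx ?jj' ?j'j => -[h1 h2].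
      by move: (h2 isT).
    by move: (h1 isT).
  have b_ne p : sval b = p -> sval x = p \/ sval x' = p -> False.
    by move=> bp [] /esym/(etrans bp)/val_inj bx; [apply: Dx|apply: Dx']; rewrite -bx.
  have arc_one_ainv := word_arc_one_ainv.
  case: xx'_at b_at => -[x_at x'_at] [] b_at.
  - by apply: (b_ne _ b_at); case/orP: l_jj' => /eqP ->; [left|right].
  - apply: twin_sep; have := arc_one_ainv j l; have := arc_one_ainv j' l.
    rewrite -x_at -x'_at -b_at; change (M_arc x b <-> M_arc x' b) in xx'b; tauto.
  - apply: twin_sep; have := arc_one_ainv l j; have := arc_one_ainv l j'.
    rewrite -x_at -x'_at -b_at (eq_sym j) (eq_sym j').
    change (M_arc b x <-> M_arc b x') in bxx'; tauto.
  - by apply: (b_ne _ b_at); case/orP: l_jj' => /eqP ->; [left|right].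
have D_out y : D y -> ~~ in_branch (sval y).
  move=> Dy; move/clos_rt_rt1n_iff: (conn y Dy) d_out.
  elim=> // a b c [Da [Db ab]] _ IH a_out; apply: IH; apply/negP => b_in.
  have cross : in_branch (sval a) != in_branch (sval b) by rewrite (negbTE a_out) b_in.
  case: ab => [ab|ba].
  - have [_ b_at] := in_branch_word_arc ab cross.
    by apply: (not_boundary b _ Db _ (or_intror b_at)); move: b_in; rewrite /in_branch b_at.
  - rewrite eq_sym in cross; have [b_at _] := in_branch_word_arc ba cross.
    by apply: (not_boundary b _ Db _ (or_introl b_at)); move: b_in; rewrite /in_branch b_at.
exists swap_vertex; split; first exact: swap_automorphism.
  by move=> a Da; apply: val_inj; rewrite /= /swap_pair (negbTE (D_out a Da)).
apply: val_inj; case: xx'_at => -[/= -> ->].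
all: by rewrite /swap_pair /in_branch /= eqxx /relabel_pair /= tpermL.
Qed.

End Swap.

Lemma word_arc_from_one i q : word_arc (one_at i) q -> q = ainv_at q.2 /\ i != q.2.
Proof. by case: q => u l [/= il ->]. Qed.

Lemma word_arc_to_ainv p l :
  reduced p.1 -> word_arc p (ainv_at l) -> p = one_at p.2 /\ p.2 != l.
Proof. by case: p => w i /= rw [/= il /esym/fp_mul_ainv_eq_ainv ->]. Qed.

Lemma extendable_by_swap (C : V -> Prop) c x x' phi j j' :
  C c -> connected_from arc C c -> ~ C x -> ~ C x' -> x <> x' -> twins_on arc C x x' ->
  automorphism phi -> ~~ in_branch j j' (sval (phi c)) ->
  branch_roots j j' (sval (phi x)) (sval (phi x')) -> extendable arc C x x'.
Proof.
move=> Cc conn Cx Cx' xx' twins aut_phi c_out xx'_at.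
have jj' : j != j'.
  apply/eqP => jj'; apply/xx'/(automorphism_inj aut_phi)/val_inj.
  by case: xx'_at => -[x_at x'_at]; rewrite /= x_at x'_at jj'.
apply: (extendable_preimage aut_phi).
apply: (swap_extendable jj' _ _ _ _ _ c_out xx'_at).
- exact/(image_setP _ aut_phi).
- exact: connected_from_image.
- by move/(image_setP _ aut_phi).
- by move/(image_setP _ aut_phi).
- exact: twins_on_image.
Qed.

Lemma M_one_point_extension : one_point_extension arc.
Proof.
move=> C c x x' Cc conn Cx Cx' xx' cx twins.
have [[cx_cx' _] [xc_x'c _]] := twins c Cc.
have ext := extendable_by_swap Cc conn Cx Cx' xx' twins.
case: cx => [c_x|x_c].
- have [phi aut_phi phi_c] := translate_to_one (svalP c); have [_ phi_arc] := aut_phi.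
  have c_to y : arc c y ->
      sval (phi y) = ainv_at (sval (phi y)).2 /\ (sval c).2 != (sval (phi y)).2.
    by move=> /phi_arc cy; apply: word_arc_from_one; rewrite -(phi_c c).
  have [x_at cx_gen] := c_to x c_x; have [x'_at cx'_gen] := c_to x' (cx_cx' c_x).
  apply: (ext _ (sval (phi x)).2 (sval (phi x')).2 aut_phi); last by right.
  by rewrite /in_branch phi_c // first_gen_one negb_or cx_gen cx'_gen.
- have [phi aut_phi phi_x] := translate_to_one (svalP x); have [_ phi_arc] := aut_phi.
  have [c_at xc_gen] :
      sval (phi c) = ainv_at (sval (phi c)).2 /\ (sval x).2 != (sval (phi c)).2.
    by apply: word_arc_from_one; rewrite -(phi_x x) //; exact: (iffLR (phi_arc _ _) x_c).
  have [x'_at x'c_gen] :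
      sval (phi x') = one_at (sval (phi x')).2 /\ (sval (phi x')).2 != (sval (phi c)).2.
    apply: (word_arc_to_ainv (svalP (phi x'))); rewrite -c_at.
    exact: (iffLR (phi_arc _ _) (xc_x'c x_c)).
  apply: (ext _ (sval (phi x)).2 (sval (phi x')).2 aut_phi); last by left; rewrite phi_x.
  rewrite c_at /in_branch first_gen_ainv (phi_x x) //= negb_or.
  by rewrite !(eq_sym (sval (phi c)).2) xc_gen x'c_gen.
Qed.

Lemma M_vertex_transitive : vertex_transitive arc.
Proof.
move=> a b.
have [phi aut_phi phi_a] := translate_to_one (svalP a).
have [psi aut_psi psi_b] := translate_to_one (svalP b).
have [psi' [aut_psi' psiK psi'K]] := automorphism_inv aut_psi.
exists (psi' \o swap_vertex (sval a).2 (sval b).2 \o phi).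
  by do 2 apply: automorphism_comp => //; apply: swap_automorphism.
rewrite /= -[RHS]psiK; congr psi'; apply: val_inj.
by rewrite /= phi_a // psi_b // /swap_pair /in_branch /= eqxx /relabel_pair /= tpermL.
Qed.

End FreeProductDigraph.

Theorem proposition5p3 (n k : nat) (hn : 3 <= n) (hk : 2 <= k) :
  connected_homogeneous (@M_arc n k).
Proof.
apply: connected_homogeneous_of_extension.
- exact: M_vertex_transitive.
- exact: M_one_point_extension.
Qed.
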